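(* There exists a constant $\alpha>0$ such that for every $P_7$-free graph $G$, for every minimal separator $S$ of $G$, and for every probability measure $\mu$ on $S$, there exists a vertex $v\in V(G)$ with $\mu(N(v))\ge \alpha$.
   Context: All graphs are finite, simple and undirected. $P_k$ denotes the path on $k$ vertices; $G$ is $P_k$-free if it has no induced subgraph isomorphic to $P_k$. $N(v)$ is the open neighbourhood of $v$, and $\mu(N(v))$ means $\mu(N(v)\cap S)$. For distinct $s,t\in V(G)$, a set $S\subseteq V(G)$ is an $s$-$t$ separator if $s$ and $t$ lie in different connected components of $G\setminus S$; it is a minimal $s$-$t$ separator if no proper subset of it is an $s$-$t$ separator. $S$ is a minimal separator of $G$ if it is a minimal $s$-$t$ separator for some $s,t\in V(G)$. *)

From Stdlib Require Import Reals.
From mathcomp Require Import all_boot all_order all_algebra.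
From mathcomp Require Import Rstruct.
Set Implicit Arguments. Unset Strict Implicit. Unset Printing Implicit Defensive.
Import Order.TTheory GRing.Theory Num.Theory.

Definition simple_graph (T : finType) (e : rel T) : Prop :=
  symmetric e /\ irreflexive e.

Definition has_induced_path (T : finType) (e : rel T) (k : nat) : Prop :=
  exists f : 'I_k -> T, injective f /\
    forall i j : 'I_k, e (f i) (f j) = ((i.+1 == j :> nat) || (j.+1 == i :> nat)).

Definition Pk_free (T : finType) (e : rel T) (k : nat) : Prop :=
  ~ has_induced_path e k.

Definition del_rel (T : finType) (e : rel T) (S : {set T}) : rel T :=
  [rel x y | [&& e x y, x \notin S & y \notin S]].

Definition separates (T : finType) (e : rel T) (S : {set T}) (s t : T) : Prop :=
  [/\ s \notin S, t \notin S & ~~ connect (del_rel e S) s t].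

Definition minimal_st_separator (T : finType) (e : rel T) (S : {set T}) (s t : T) : Prop :=
  separates e S s t /\ forall S' : {set T}, S' \proper S -> ~ separates e S' s t.

Definition minimal_separator (T : finType) (e : rel T) (S : {set T}) : Prop :=
  exists s t : T, s != t /\ minimal_st_separator e S s t.

Definition prob_on (T : finType) (S : {set T}) (mu : T -> R) : Prop :=
  (forall x, x \in S -> (0 <= mu x)%R) /\ (\sum_(x in S) mu x = 1)%R.

Definition mu_nbhd (T : finType) (e : rel T) (S : {set T}) (mu : T -> R) (v : T) : R :=
  (\sum_(x in S | e v x) mu x)%R.

From Stdlib Require Import Reals.
From mathcomp Require Import all_boot all_order all_algebra.
From mathcomp Require Import Rstruct.
From mathcomp Require Import ring lra.
Set Implicit Arguments. Unset Strict Implicit. Unset Printing Implicit Defensive.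
Import Order.TTheory GRing.Theory Num.Theory.
Local Open Scope ring_scope.

(* Suppose every vertex sees measure at most alpha = 1/1000 of S, and let X, Y be two full
   components of the minimal separator S.  Call z X-linked to v when z - a1 - a2 - v is an
   induced path with a1, a2 in X, and let rho_X(v) be the measure of such z.  For z X-linked
   and w Y-linked to v, the path z - a1 - a2 - v - b2 - b1 - w is an induced P7 unless one
   of seven adjacencies occurs, each of measure at most alpha; hence
   rho_X(v) rho_Y(v) <= 7 alpha.
   Conversely, following two layers of X out of N(t) and closing with an edge of Y leaving
   N(t), P7-freeness forces s, t in S to have a common neighbour in X or to be X-linked,
   up to events of small measure.  Averaging this over the common neighbours of a vertex v
   shows that the v with rho_X(v) < 1/4 have measure less than 1/2.  By symmetry some v has
   rho_X(v), rho_Y(v) >= 1/4, contradicting the first bound. *)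

Definition path7_adj (i j : 'I_7) : bool := (i.+1 == j :> nat) || (j.+1 == i :> nat).

Lemma path7_adj_sep (i j : 'I_7) : i != j -> exists k : 'I_7, path7_adj k i != path7_adj k j.
Proof.
case: i j => [[|[|[|[|[|[|[|//]]]]]]] ?] [[|[|[|[|[|[|[|//]]]]]]] ?] //= _;
  first [ by exists (@Ordinal 7 0 isT) | by exists (@Ordinal 7 1 isT)
        | by exists (@Ordinal 7 2 isT) | by exists (@Ordinal 7 3 isT)
        | by exists (@Ordinal 7 4 isT) | by exists (@Ordinal 7 5 isT)
        | by exists (@Ordinal 7 6 isT) ].
Qed.

Section InducedPath.
Variables (T : finType) (e : rel T).
Hypotheses (e_sym : symmetric e) (e_irr : irreflexive e).

Lemma induced_path7_of_adj (f : 'I_7 -> T) :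
  (forall i j, e (f i) (f j) = path7_adj i j) -> has_induced_path e 7.
Proof.
move=> fE; exists f; split => // i j fij.
have [//|/path7_adj_sep[k]] := eqVneq i j.
by rewrite -!fE fij eqxx.
Qed.

Lemma induced_P7 p0 p1 p2 p3 p4 p5 p6 :
  e p0 p1 -> e p1 p2 -> e p2 p3 -> e p3 p4 -> e p4 p5 -> e p5 p6 ->
  ~~ e p0 p2 -> ~~ e p0 p3 -> ~~ e p0 p4 -> ~~ e p0 p5 -> ~~ e p0 p6 ->
  ~~ e p1 p3 -> ~~ e p1 p4 -> ~~ e p1 p5 -> ~~ e p1 p6 ->
  ~~ e p2 p4 -> ~~ e p2 p5 -> ~~ e p2 p6 ->
  ~~ e p3 p5 -> ~~ e p3 p6 -> ~~ e p4 p6 -> has_induced_path e 7.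
Proof.
move=> *; apply: (@induced_path7_of_adj (nth p0 [:: p0; p1; p2; p3; p4; p5; p6])).
case=> [[|[|[|[|[|[|[|//]]]]]]] ?] [[|[|[|[|[|[|[|//]]]]]]] ?]; rewrite /path7_adj /=;
  first [ by rewrite e_irr | by apply/negbTE | by rewrite e_sym; apply/negbTE
        | done | by rewrite e_sym ].
Qed.

End InducedPath.

Definition indic (b : bool) : R := if b then 1 else 0.

Lemma indic_ge0 b : 0 <= indic b. Proof. by case: b; rewrite /indic ?ler01. Qed.

Lemma indic_le1 b : indic b <= 1. Proof. by case: b; rewrite /indic ?ler01. Qed.

Lemma ler_indic (a b : bool) : (a -> b) -> indic a <= indic b.
Proof. by case: a; case: b; rewrite /indic ?ler01 // => /(_ isT). Qed.

Lemma indicM (a b : bool) : indic (a && b) = indic a * indic b.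
Proof. by case: a; case: b; rewrite /indic /= ?mulr1 ?mulr0. Qed.

Lemma indicN (a : bool) : indic (~~ a) = 1 - indic a.
Proof. by case: a; rewrite /indic /= ?subrr ?subr0. Qed.

Lemma indic_le_sum (a : bool) (cs : seq bool) :
  (a -> has id cs) -> indic a <= \sum_(c <- cs) indic c.
Proof.
elim: cs => [|c cs IH] acs.
  by rewrite big_nil; case: a acs => [/(_ isT)|_] //; rewrite lexx.
rewrite big_cons; case: c acs => /= acs.
  by rewrite ler_wpDr ?indic_le1 ?sumr_ge0 // => c _; exact: indic_ge0.
by rewrite /(indic false) add0r; apply: IH.
Qed.

Section Mean.
Variables (T : finType) (S : {set T}) (mu : T -> R).
Hypotheses (mu_ge0 : forall x, x \in S -> 0 <= mu x) (mu_sum1 : \sum_(x in S) mu x = 1).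

Definition mean (f : T -> R) : R := \sum_(x in S) mu x * f x.

Lemma eq_mean f g : (forall x, x \in S -> f x = g x) -> mean f = mean g.
Proof. by move=> fg; apply: eq_bigr => x xS; rewrite fg. Qed.

Lemma ler_mean f g : (forall x, x \in S -> f x <= g x) -> mean f <= mean g.
Proof. by move=> fg; apply: ler_sum => x xS; rewrite ler_wpM2l ?mu_ge0 ?fg. Qed.

Lemma mean_ge0 f : (forall x, x \in S -> 0 <= f x) -> 0 <= mean f.
Proof. by move=> f0; apply: sumr_ge0 => x xS; rewrite mulr_ge0 ?mu_ge0 ?f0. Qed.

Lemma meanD f g : mean (fun x => f x + g x) = mean f + mean g.
Proof. by rewrite /mean -big_split; apply: eq_bigr => x _; rewrite mulrDr. Qed.

Lemma meanB f g : mean (fun x => f x - g x) = mean f - mean g.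
Proof. by rewrite /mean -sumrB; apply: eq_bigr => x _; rewrite mulrBr. Qed.

Lemma meanMl c f : mean (fun x => c * f x) = c * mean f.
Proof. by rewrite /mean mulr_sumr; apply: eq_bigr => x _; rewrite mulrCA. Qed.

Lemma meanMr c f : mean (fun x => f x * c) = mean f * c.
Proof. by rewrite /mean mulr_suml; apply: eq_bigr => x _; rewrite mulrA. Qed.

Lemma mean_cst c : mean (fun _ => c) = c.
Proof. by rewrite /mean -mulr_suml mu_sum1 mul1r. Qed.

Lemma mean_indicN (P : pred T) :
  mean (fun x => indic (~~ P x)) = 1 - mean (fun x => indic (P x)).
Proof. by under eq_mean => x _ do rewrite indicN; rewrite meanB mean_cst. Qed.

Lemma mean_le_cst f c : (forall x, x \in S -> f x <= c) -> mean f <= c.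
Proof. by move=> fc; rewrite -[c]mean_cst; exact: ler_mean. Qed.

Lemma mean_exchange (f : T -> T -> R) :
  mean (fun x => mean (f x)) = mean (fun y => mean (f^~ y)).
Proof.
rewrite /mean; under eq_bigr do rewrite mulr_sumr.
rewrite exchange_big /=; apply: eq_bigr => y _; rewrite mulr_sumr.
by apply: eq_bigr => x _; rewrite mulrCA.
Qed.

Lemma mean3_le_inner (f : T -> T -> T -> R) c :
  (forall x y, x \in S -> y \in S -> mean (f x y) <= c) ->
  mean (fun x => mean (fun y => mean (f x y))) <= c.
Proof. by move=> fc; do 2!apply: mean_le_cst => ? ?; exact: fc. Qed.

Lemma mean3_le_middle (f : T -> T -> T -> R) c :
  (forall x z, x \in S -> z \in S -> mean (fun y => f x y z) <= c) ->
  mean (fun x => mean (fun y => mean (f x y))) <= c.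
Proof.
move=> fc; apply: mean_le_cst => x xS; rewrite mean_exchange.
by apply: mean_le_cst => z zS; exact: fc.
Qed.

Lemma mean3_le_outer (f : T -> T -> T -> R) c :
  (forall y z, y \in S -> z \in S -> mean (fun x => f x y z) <= c) ->
  mean (fun x => mean (fun y => mean (f x y))) <= c.
Proof.
move=> fc; rewrite mean_exchange; apply: mean_le_cst => y yS; rewrite mean_exchange.
by apply: mean_le_cst => z zS; exact: fc.
Qed.

Lemma mean_mul f g : mean (fun x => mean (fun y => f x * g y)) = mean f * mean g.
Proof. by rewrite -meanMr; apply: eq_mean => x _; rewrite meanMl. Qed.

Lemma mean_indic_nbhd (e : rel T) u : mean (fun x => indic (e u x)) = mu_nbhd e S mu u.
Proof.
rewrite /mu_nbhd /mean big_mkcondr /=; apply: eq_bigr => x _.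
by rewrite /indic; case: (e u x); rewrite ?mulr1 ?mulr0.
Qed.

Lemma mean_lt_exists f g : mean f < mean g -> exists2 x, x \in S & f x < g x.
Proof.
move=> fg; apply/exists_inP; apply: contraLR fg => /exists_inPn gf.
by rewrite -leNgt; apply: ler_mean => x /gf; rewrite -leNgt.
Qed.

Lemma support_nonempty : exists x, x \in S.
Proof.
have [S0|[x xS]] := set_0Vmem S; last by exists x.
by move: mu_sum1; rewrite S0 big_set0 => /eqP; rewrite eq_sym oner_eq0.
Qed.

End Mean.

Definition connected_set (T : finType) (e : rel T) (X : {set T}) : Prop :=
  forall D : {set T}, D \subset X -> (exists d, d \in D) ->
  (exists2 y, y \in X & y \notin D) ->
  exists d y, [/\ d \in D, y \in X, y \notin D & e d y].

Lemma connect_stable (T : finType) (r : rel T) (P : pred T) x y :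
  (forall u w, P u -> r u w -> P w) -> P x -> connect r x y -> P y.
Proof.
move=> rP Px /connectP[p rp ->]; elim: p x Px rp => //= w p IH x Px /andP[rxw rp].
exact: IH (rP _ _ Px rxw) rp.
Qed.

Section Components.
Variables (T : finType) (e : rel T) (S : {set T}).
Hypothesis e_sym : symmetric e.

Lemma del_rel_sym (S' : {set T}) : symmetric (del_rel e S').
Proof. by move=> x y; rewrite /del_rel /= e_sym; case: (x \in S'); case: (y \in S'). Qed.

Lemma connect_del_sym (S' : {set T}) x y :
  connect (del_rel e S') x y = connect (del_rel e S') y x.
Proof. exact/sym_connect_sym/del_rel_sym. Qed.

Lemma connect_del_notin (S' : {set T}) u y :
  u \notin S' -> connect (del_rel e S') u y -> y \notin S'.
Proof.
by move=> uS; apply: (connect_stable (P := [pred y | y \notin S'])) => // a b _ /and3P[].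
Qed.

Definition component u := [set y | connect (del_rel e S) u y].

Lemma component_id u : u \in component u.
Proof. by rewrite inE connect0. Qed.

Lemma component_connected u : connected_set e (component u).
Proof.
move=> D sDC [d0 d0D] [y0 y0C y0D].
case: (boolP [exists d, exists y, [&& d \in D, y \in component u, y \notin D & e d y]]).
  by case/existsP => d /existsP[y /and4P[? ? ? ?]]; exists d, y.
move/existsPn => noexit; exfalso; move/negP: y0D; apply.
have DC : forall a, a \in D -> a \in component u by apply/subsetP.
have D_closed a b : a \in D -> del_rel e S a b -> b \in D.
  move=> aD dab; apply: contraT => bD; have /existsPn/(_ b) := noexit a.
  have ua : connect (del_rel e S) u a by have := DC a aD; rewrite inE.
  by rewrite aD bD inE (connect_trans ua (connect1 dab)); case/and3P: dab => ->.
apply: (connect_stable D_closed d0D); move: (DC d0 d0D) y0C; rewrite !inE => ud0.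
by apply: connect_trans; rewrite connect_del_sym.
Qed.

Lemma component_anticomplete u w a b : u \notin S -> w \notin S ->
  ~~ connect (del_rel e S) u w -> a \in component u -> b \in component w -> ~~ e a b.
Proof.
move=> uS wS nuw; rewrite !inE => ua wb; apply: contra nuw => eab.
have ub : connect (del_rel e S) u b.
  apply: (connect_trans ua (connect1 _)).
  by rewrite /del_rel /= eab (connect_del_notin uS ua) (connect_del_notin wS wb).
by apply: connect_trans ub _; rewrite connect_del_sym.
Qed.

Lemma component_full u w x : u \notin S -> ~~ connect (del_rel e S) u w ->
  connect (del_rel e (S :\ x)) u w -> x \in S -> exists2 a, a \in component u & e x a.
Proof.
move=> uS nuw uw' xS; apply/exists_inP; apply: contraLR nuw => /exists_inPn nox.
have C_closed a b : a \in component u -> del_rel e (S :\ x) a b -> b \in component u.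
  move=> aC /and3P[eab]; rewrite !in_setD1 negb_and negbK => _.
  have [bx|bx /= bS] := eqVneq b x; first by have := nox a aC; rewrite e_sym -bx eab.
  move: aC; rewrite !inE => ua; apply: (connect_trans ua (connect1 _)).
  by rewrite /del_rel /= eab bS (connect_del_notin uS ua).
have := connect_stable (P := [pred y | y \in component u]) C_closed (component_id u) uw'.
by rewrite /= inE negbK.
Qed.

End Components.

Lemma pick_witness (T : finType) (P : pred T) x0 :
  [exists x, P x] -> P (odflt x0 [pick x | P x]).
Proof. by case: pickP => [x //|P0 /existsP[x]]; rewrite P0. Qed.

(* Witnesses are functions of the endpoints, so that the events they create can be averaged. *)
Section Links.
Variables (T : finType) (e : rel T).

Definition complete_to (Y : {set T}) v := [forall b in Y, e v b].

Definition is_common_nbr (X : {set T}) s t a := [&& a \in X, e a s & e a t].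
Definition common_nbr X s t := [exists a, is_common_nbr X s t a].
Definition cnbr X s t := odflt s [pick a | is_common_nbr X s t a].

Definition is_link (X : {set T}) s t (p : T * T) :=
  [&& p.1 \in X, p.2 \in X, e p.1 s, ~~ e p.1 t, e p.2 t, ~~ e p.2 s & e p.1 p.2].
Definition linked X s t := [exists p, is_link X s t p].
Definition link X s t := odflt (s, s) [pick p | is_link X s t p].

Definition is_exit (Y : {set T}) v (p : T * T) :=
  [&& p.1 \in Y, p.2 \in Y, e v p.1, ~~ e v p.2 & e p.1 p.2].
Definition exit Y v := odflt (v, v) [pick p | is_exit Y v p].

Lemma cnbrP X s t : common_nbr X s t -> is_common_nbr X s t (cnbr X s t).
Proof. exact: pick_witness. Qed.

Lemma linkP X s t : linked X s t -> is_link X s t (link X s t).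
Proof. exact: pick_witness. Qed.

Definition grow (X D : {set T}) := [set c in X | [exists d in D, (c == d) || e c d]].

End Links.

Section Structure.
Variables (T : finType) (e : rel T) (S X Y : {set T}).
Hypotheses (e_sym : symmetric e) (e_irr : irreflexive e) (P7_free : ~ has_induced_path e 7).
Hypothesis full_X : forall x, x \in S -> exists2 a, a \in X & e x a.
Hypothesis full_Y : forall x, x \in S -> exists2 b, b \in Y & e x b.
Hypothesis XY_anti : forall a b, a \in X -> b \in Y -> ~~ e a b.
Hypotheses (conn_X : connected_set e X) (conn_Y : connected_set e Y).

Lemma YX_anti a b : a \in X -> b \in Y -> ~~ e b a.
Proof. by rewrite e_sym; apply: XY_anti. Qed.

Lemma exitP v : v \in S -> ~~ complete_to e Y v -> is_exit e Y v (exit e Y v).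
Proof.
move=> vS /forall_inPn[y yY nvy]; apply: pick_witness.
have [b bY vb] := full_Y vS.
have [|||d [y' [dD y'Y y'D dy']]] := conn_Y (D := [set c in Y | e v c]).
- by apply/subsetP => c; rewrite inE => /andP[].
- by exists b; rewrite inE bY vb.
- by exists y; rewrite // inE yY (negbTE nvy).
move: dD y'D; rewrite !inE y'Y /= => /andP[dY vd] nvy'.
by apply/existsP; exists (d, y'); rewrite /is_exit /= dY y'Y vd nvy' dy'.
Qed.

Lemma grow_id (D : {set T}) c : c \in X -> c \in D -> c \in grow e X D.
Proof. by move=> cX cD; rewrite inE cX; apply/exists_inP; exists c; rewrite ?eqxx. Qed.

Lemma grow_subset (D : {set T}) c : c \in grow e X D -> c \in X.
Proof. by rewrite inE => /andP[]. Qed.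

Lemma grow_nbr (D : {set T}) d c : d \in D -> c \in X -> c \notin grow e X D -> ~~ e d c.
Proof.
move=> dD cX; apply: contra => dc; rewrite inE cX; apply/exists_inP.
by exists d; rewrite // e_sym dc orbT.
Qed.

Lemma grow_back (D : {set T}) c : c \in grow e X D -> c \notin D -> exists2 d, d \in D & e d c.
Proof.
rewrite inE => /andP[_ /exists_inP[d dD /orP[/eqP cd|cd]]]; first by rewrite cd dD.
by exists d; rewrite // e_sym.
Qed.

Lemma grow2_back (D : {set T}) c :
  D \subset X -> c \in grow e X (grow e X D) -> c \notin grow e X D ->
  exists c1 c2, [/\ c1 \in D, c2 \in grow e X D, c2 \notin D, e c1 c2 & e c2 c].
Proof.
move=> DX cD2 cD1; have [c2 c2D1 c2c] := grow_back cD2 cD1.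
have c2D : c2 \notin D.
  by apply: contraL c2c => c2D; exact: grow_nbr c2D (grow_subset cD2) cD1.
by have [c1 c1D c1c2] := grow_back c2D1 c2D; exists c1, c2.
Qed.

Definition nbrs_in t := [set c in X | e t c].

Lemma layer1_no_nbr s t c : ~~ common_nbr e X s t -> ~~ linked e X s t ->
  c \in grow e X (nbrs_in t) -> ~~ e c s.
Proof.
move=> nK nR; rewrite inE => /andP[cX /exists_inP[d]]; rewrite inE => /andP[dX td].
have K a : a \in X -> e a s -> e a t -> False.
  by move=> aX as_ at_; move/existsP: nK; apply; exists a; rewrite /is_common_nbr aX as_.
case/orP => [/eqP-> | cd]; apply/negP => cs; first by apply: (K d) => //; rewrite e_sym.
have tc : ~~ e c t by apply/negP => ct; exact: K c cX cs ct.
have sd : ~~ e d s by apply/negP => ds; apply: (K d) => //; rewrite e_sym.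
move/existsP: nR; apply; exists (c, d).
by rewrite /is_link /= cX dX cs tc (e_sym d t) td sd cd.
Qed.

(* The induced path w - b - t - c1 - c2 - c3 - z, where (b, w) is the exit edge of t. *)
Lemma layers_P7 t c3 z : t \in S -> ~~ complete_to e Y t ->
  c3 \in grow e X (grow e X (nbrs_in t)) -> c3 \notin grow e X (nbrs_in t) -> e c3 z ->
  ~~ e t z -> ~~ e (exit e Y t).1 z -> ~~ e (exit e Y t).2 z ->
  (forall c, c \in grow e X (nbrs_in t) -> ~~ e c z) -> has_induced_path e 7.
Proof.
move=> tS nct c3D2 c3D1 c3z tz bz wz D1z.
have /and5P[bY wY tb tw bw] := exitP tS nct.
have DX : nbrs_in t \subset X by apply/subsetP => c; rewrite inE => /andP[].
have [c1 [c2 [c1D c2D1 c2D c1c2 c2c3]]] := grow2_back DX c3D2 c3D1.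
have c1X := subsetP DX _ c1D; have c2X := grow_subset c2D1.
have c3X := grow_subset c3D2.
have tc1 : e t c1 by move: c1D; rewrite inE => /andP[].
have tc i : i \in X -> i \notin nbrs_in t -> ~~ e t i by move=> iX; rewrite inE iX.
have c3D : c3 \notin nbrs_in t by apply: contra c3D1; exact: grow_id.
have c1c3 := grow_nbr c1D c3X c3D1.
have c1z := D1z _ (grow_id c1X c1D); have c2z := D1z _ c2D1.
apply: (@induced_P7 _ _ e_sym e_irr (exit e Y t).2 (exit e Y t).1 t c1 c2 c3 z);
  first [ done | by rewrite e_sym | by apply: YX_anti | by apply: tc ].
Qed.

Lemma common_nbr_or_linked s t : s \in S -> t \in S -> ~~ complete_to e Y t -> ~~ e t s ->
  ~~ e (exit e Y t).1 s -> ~~ e (exit e Y t).2 s -> common_nbr e X s t || linked e X s t.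
Proof.
move=> sS tS nct ts bs ws; apply/norP => -[nK nR]; apply: P7_free.
have D1s c : c \in grow e X (nbrs_in t) -> ~~ e c s by exact: layer1_no_nbr.
set D2 := grow e X (grow e X (nbrs_in t)).
have [/exists_inP[c3 c3D2 sc3]|/exists_inPn D2s] := boolP [exists c3 in D2, e s c3].
  have c3D1 : c3 \notin grow e X (nbrs_in t) by apply: contraL sc3 => /D1s; rewrite e_sym.
  by apply: (layers_P7 tS nct c3D2 c3D1 _ ts bs ws D1s); rewrite e_sym.
have [a aX sa] := full_X sS; have [a0 a0X ta0] := full_X tS.
have D2X : D2 \subset X by apply/subsetP => c /grow_subset.
have [||c3 [c4 [c3D2 c4X c4D2 c3c4]]] := conn_X D2X.
- by exists a0; rewrite !grow_id // ?inE ?a0X.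
- by exists a => //; apply: contraL sa => /D2s.
have c3D1 : c3 \notin grow e X (nbrs_in t).
  by apply: contraL c3c4 => c3D1; exact: grow_nbr c3D1 c4X c4D2.
have /and5P[bY wY _ _ _] := exitP tS nct.
apply: (layers_P7 tS nct c3D2 c3D1 c3c4 _ _ _ (fun c cD1 => grow_nbr cD1 c4X c4D2));
  try by apply: YX_anti.
by apply: contra c4D2 => tc4; rewrite !grow_id // inE c4X.
Qed.

Lemma linked_of_common_nbrs y s t : s \in S -> ~~ complete_to e Y s ->
  common_nbr e X y s -> common_nbr e X y t ->
  ~~ e (exit e Y s).1 y -> ~~ e (exit e Y s).2 y ->
  ~~ e (exit e Y s).1 t -> ~~ e (exit e Y s).2 t ->
  ~~ e s y -> ~~ e s t -> ~~ e y t ->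
  ~~ e (cnbr e X y t) s -> ~~ e (cnbr e X y s) t -> linked e X s t.
Proof.
move=> sS ncs Kys Kyt b_y w_y b_t w_t sy st yt a2s a1t.
have /and5P[bY wY sb sw bw] := exitP sS ncs.
have /and3P[a1X a1y a1s] := cnbrP Kys; have /and3P[a2X a2y a2t] := cnbrP Kyt.
have [a1a2|na1a2] := boolP (e (cnbr e X y s) (cnbr e X y t)).
  apply/existsP; exists (cnbr e X y s, cnbr e X y t).
  by rewrite /is_link /= a1X a2X a1s a1t a2t a2s.
exfalso; apply: P7_free.
apply: (@induced_P7 _ _ e_sym e_irr (exit e Y s).2 (exit e Y s).1 s (cnbr e X y s) y
  (cnbr e X y t) t); first [ done | by rewrite e_sym | by apply: YX_anti ].
Qed.

Lemma linked_both_P7 v z w : linked e X z v -> linked e Y w v ->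
  ~~ e v z -> ~~ e z w -> ~~ e v w ->
  ~~ e (link e Y w v).1 z -> ~~ e (link e Y w v).2 z ->
  ~~ e (link e X z v).1 w -> ~~ e (link e X z v).2 w -> has_induced_path e 7.
Proof.
move=> /linkP/and4P[a1X a2X a1z /and4P[a1v a2v a2z a1a2]].
move=> /linkP/and4P[b1Y b2Y b1w /and4P[b1v b2v b2w b1b2]] vz zw vw b1z b2z a1w a2w.
apply: (@induced_P7 _ _ e_sym e_irr z (link e X z v).1 (link e X z v).2 v
  (link e Y w v).2 (link e Y w v).1 w);
  first [ done | by rewrite e_sym | by apply: XY_anti | by apply: YX_anti ].
Qed.

Section Averaging.
Variables (mu : T -> R) (alpha : R).
Hypotheses (mu_ge0 : forall x, x \in S -> 0 <= mu x) (mu_sum1 : \sum_(x in S) mu x = 1).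
Hypothesis nbhd_small : forall u, mu_nbhd e S mu u <= alpha.
Hypotheses (alpha_gt0 : 0 < alpha) (alpha_small : alpha <= 1/1000).
Local Notation mean := (mean S mu).

Lemma mean_nbr_le u : mean (fun x => indic (e u x)) <= alpha.
Proof. by rewrite mean_indic_nbhd. Qed.

Lemma mean2_nbr_le (f : T -> T) : mean (fun z => mean (fun w => indic (e (f z) w))) <= alpha.
Proof. by apply: mean_le_cst => // z _; exact: mean_nbr_le. Qed.

Lemma mean2_nbr_le_exchange (f : T -> T) :
  mean (fun z => mean (fun w => indic (e (f w) z))) <= alpha.
Proof. by rewrite mean_exchange; exact: mean2_nbr_le. Qed.

Lemma mean_complete_le : mean (fun v => indic (complete_to e Y v)) <= alpha.
Proof.
have [x xS] := support_nonempty mu_sum1; have [y yY _] := full_Y xS.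
apply: le_trans (mean_nbr_le y); apply: ler_mean => // v _.
by apply: ler_indic => /forall_inP/(_ y yY); rewrite e_sym.
Qed.

Lemma mean2D (f g : T -> T -> R) :
  mean (fun x => mean (fun y => f x y + g x y)) =
  mean (fun x => mean (f x)) + mean (fun x => mean (g x)).
Proof. by rewrite -meanD; apply: eq_mean => x _; rewrite meanD. Qed.

Definition rho Z v := mean (fun z => indic (linked e Z z v)).

Lemma rho_mul_le v : rho X v * rho Y v <= 7 * alpha.
Proof.
rewrite /rho -mean_mul //.
pose a1 z := (link e X z v).1; pose a2 z := (link e X z v).2.
pose b1 w := (link e Y w v).1; pose b2 w := (link e Y w v).2.
apply: (@le_trans _ _ (mean (fun z => mean (fun w =>
   indic (e v z) + indic (e v w) + indic (e z w) + indic (e (b1 w) z) + indic (e (b2 w) z)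
   + indic (e (a1 z) w) + indic (e (a2 z) w))))).
  apply: ler_mean => // z _; apply: ler_mean => // w _; rewrite -indicM.
  apply: le_trans (indic_le_sum (cs := [:: e v z; e v w; e z w; e (b1 w) z; e (b2 w) z;
     e (a1 z) w; e (a2 z) w]) _) _; last by rewrite !big_cons big_nil addr0 !addrA.
  move=> /andP[RX RY]; apply/negPn/negP; rewrite /= !negb_or.
  move=> /and5P[vz vw zw b1z /andP[b2z /andP[a1w /andP[a2w _]]]].
  by apply: P7_free; apply: (linked_both_P7 RX RY).
under eq_mean => z _ do rewrite !meanD; rewrite !meanD.
move: (mean2_nbr_le_exchange (fun _ => v)) (mean2_nbr_le (fun _ => v)) (mean2_nbr_le id).
move: (mean2_nbr_le_exchange b1) (mean2_nbr_le_exchange b2).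
move: (mean2_nbr_le a1) (mean2_nbr_le a2) => /=.
lra.
Qed.

Definition tail_hits z y :=
  indic (e z y) + indic (e (exit e Y z).1 y) + indic (e (exit e Y z).2 y).

Lemma tail_hits_ge0 z y : 0 <= tail_hits z y.
Proof. by rewrite !addr_ge0 ?indic_ge0. Qed.

Lemma mean_tail_hits_le z : mean (tail_hits z) <= 3 * alpha.
Proof.
rewrite !meanD; move: (mean_nbr_le z) (mean_nbr_le (exit e Y z).1).
by move: (mean_nbr_le (exit e Y z).2); lra.
Qed.

(* The events under which [linked_of_common_nbrs] does not apply to (y, z, v). *)
Definition defect v := indic (complete_to e Y v) + mean (fun y => mean (fun z =>
  indic (complete_to e Y z) + indic (e (cnbr e X y v) z) + tail_hits z y
  + tail_hits z v + indic (e y v) + indic (e (cnbr e X y z) v))).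

Lemma indic_complete_le_defect v : indic (complete_to e Y v) <= defect v.
Proof.
rewrite lerDl; apply: mean_ge0 => // y _; apply: mean_ge0 => // z _.
by rewrite !addr_ge0 ?indic_ge0 ?tail_hits_ge0.
Qed.

Lemma defect_ge0 v : 0 <= defect v.
Proof. exact: le_trans (indic_ge0 _) (indic_complete_le_defect v). Qed.

Lemma mean_defect_le : mean defect <= 11 * alpha.
Proof.
rewrite /defect; under eq_mean => v _ do rewrite !mean2D.
rewrite !meanD.
apply: le_trans; first (repeat apply: lerD).
all: try exact: mean_complete_le.
all: try (apply: (mean3_le_inner mu_ge0 mu_sum1) => v y _ _;
  first [exact: mean_nbr_le | exact: mean_complete_le]).
all: try (apply: (mean3_le_middle mu_ge0 mu_sum1) => v z _ _; exact: mean_nbr_le).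
all: try (apply: (mean3_le_outer mu_ge0 mu_sum1) => y z _ _; exact: mean_nbr_le).
lra.
Qed.

Definition shared v z := common_nbr e X z v && ~~ linked e X z v.

Definition kappa v := mean (fun y => indic (common_nbr e X y v)).

Definition sparse := [set v in S | rho X v < 1/4].

Lemma one_sub_rho_le v : v \in S -> ~~ complete_to e Y v ->
  1 - rho X v <= mean (fun z => indic (shared v z)) + 3 * alpha.
Proof.
move=> vS ncv; rewrite /rho -(mean_indicN mu_sum1).
apply: (@le_trans _ _ (mean (fun z => indic (shared v z) + tail_hits v z))).
  apply: ler_mean => // z zS.
  apply: le_trans (indic_le_sum (cs := [:: shared v z; e v z; e (exit e Y v).1 z;
    e (exit e Y v).2 z]) _) _; last by rewrite !big_cons big_nil addr0 /tail_hits !addrA.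
  move=> nR; apply/negPn/negP; rewrite /= !negb_or => /and5P[nZ vz bz wz _].
  have := common_nbr_or_linked zS vS ncv vz bz wz.
  by rewrite (negbTE nR) orbF => K; move: nZ; rewrite /shared K nR.
by rewrite meanD; have := mean_tail_hits_le v; lra.
Qed.

Lemma mean_shared_le_kappa v : mean (fun z => indic (shared v z)) <= kappa v.
Proof. by apply: ler_mean => // z _; apply: ler_indic => /andP[]. Qed.

Lemma mean_shared_common_le_defect v :
  mean (fun z => indic (shared v z) *
    mean (fun y => indic (common_nbr e X y z) * indic (common_nbr e X y v))) <= defect v.
Proof.
apply: le_trans (_ : _ <= mean (fun y => mean (fun z =>
  indic (complete_to e Y z) + indic (e (cnbr e X y v) z) + tail_hits z y
  + tail_hits z v + indic (e y v) + indic (e (cnbr e X y z) v)))) _; last first.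
  by rewrite /defect lerDr indic_ge0.
under eq_mean => z _ do rewrite -meanMl.
rewrite mean_exchange; apply: ler_mean => // y yS; apply: ler_mean => // z zS.
rewrite -!indicM; apply: le_trans (indic_le_sum (cs := [:: complete_to e Y z;
  e (cnbr e X y v) z; e z y; e (exit e Y z).1 y; e (exit e Y z).2 y; e z v;
  e (exit e Y z).1 v; e (exit e Y z).2 v; e y v; e (cnbr e X y z) v]) _) _;
  last by rewrite !big_cons big_nil addr0 /tail_hits !addrA.
move=> /andP[/andP[Kzv nRzv] /andP[Kyz Kyv]]; apply/negPn/negP; rewrite /= !negb_or.
move=> /and5P[nc ayvz zy bzy /and5P[wzy zv bzv wzv /and3P[yv ayzv _]]].
by move/negP: nRzv; apply; apply: (linked_of_common_nbrs zS nc Kyz Kyv).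
Qed.

Lemma kappa_le v z : z \in S -> kappa v <= rho X z
  + mean (fun y => indic (common_nbr e X y z) * indic (common_nbr e X y v))
  + indic (complete_to e Y z) + mean (tail_hits z).
Proof.
move=> zS; rewrite /kappa /rho -(mean_cst mu_sum1 (indic (complete_to e Y z))) -!meanD.
apply: ler_mean => // y yS; rewrite -indicM.
apply: le_trans (indic_le_sum (cs := [:: linked e X y z;
  common_nbr e X y z && common_nbr e X y v; complete_to e Y z; e z y;
  e (exit e Y z).1 y; e (exit e Y z).2 y]) _) _;
  last by rewrite !big_cons big_nil addr0 /tail_hits !addrA.
move=> Kyv; apply/negPn/negP; rewrite /= Kyv andbT !negb_or.
move=> /and5P[nR nK nc zy /andP[bzy /andP[wzy _]]].
have := common_nbr_or_linked yS zS nc zy bzy wzy.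
by rewrite (negbTE nR) (negbTE nK).
Qed.

Lemma kappa_mul_le v :
  kappa v * mean (fun z => indic (shared v z && (z \in sparse)))
  <= mean (fun z => indic (shared v z && (z \in sparse))) / 4 + defect v + 4 * alpha.
Proof.
set m := mean _.
have : mean (fun z => indic (shared v z && (z \in sparse)) * kappa v) <=
    mean (fun z => indic (shared v z && (z \in sparse)) * (1 / 4) + indic (shared v z) *
      mean (fun y => indic (common_nbr e X y z) * indic (common_nbr e X y v))
    + indic (complete_to e Y z) + mean (tail_hits z)).
  apply: ler_mean => // z zS; have [/andP[Zz zL]|_] := boolP (shared v z && (z \in sparse)).
    have rz : rho X z < 1/4 by move: zL; rewrite inE zS.
    by rewrite Zz [indic true]/indic !mul1r; have := kappa_le v zS; lra.
  rewrite [indic false]/indic !mul0r add0r !addr_ge0 ?mulr_ge0 ?indic_ge0 //.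
    by apply: mean_ge0 => // y _; rewrite mulr_ge0 ?indic_ge0.
  by apply: mean_ge0 => // y _; exact: tail_hits_ge0.
rewrite meanMr -/m !meanD meanMr -/m.
have := mean_shared_common_le_defect v; have := mean_complete_le.
have : mean (fun z => mean (tail_hits z)) <= 3 * alpha.
  by apply: mean_le_cst => // z _; exact: mean_tail_hits_le.
lra.
Qed.

Lemma exists_sparse_low_defect : 1/2 <= mean (fun v => indic (v \in sparse)) ->
  exists2 v, v \in sparse & defect v < 30 * alpha.
Proof.
move=> half; set ell := mean _ in half.
have : mean defect < mean (fun v => indic (v \in sparse) * (30 * alpha)).
  rewrite meanMr -/ell; have := ler_wpM2r (ltW alpha_gt0) half.
  by have := alpha_gt0; have := mean_defect_le; lra.
case/(mean_lt_exists mu_ge0) => v _; have [vL|_] := boolP (v \in sparse).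
  by rewrite [indic true]/indic mul1r; exists v.
by rewrite [indic false]/indic mul0r ltNge defect_ge0.
Qed.

Lemma mean_sparse_lt : mean (fun v => indic (v \in sparse)) < 1/2.
Proof.
rewrite ltNge; apply/negP => half; have [v vL Dv] := exists_sparse_low_defect half.
have /andP[vS rv] : (v \in S) && (rho X v < 1/4) by move: vL; rewrite inE.
have ncv : ~~ complete_to e Y v.
  apply: contraTN Dv => cv; rewrite -leNgt; apply: le_trans (indic_complete_le_defect v).
  by rewrite cv /indic; have := alpha_small; lra.
set ell := mean _ in half.
set mL := mean (fun z => indic (shared v z && (z \in sparse))).
have m_split : mean (fun z => indic (shared v z)) <= mL + (1 - ell).
  rewrite -/ell -(mean_indicN mu_sum1) -meanD; apply: ler_mean => // z _.
  by case: (z \in sparse); case: (shared v z); rewrite /indic /=; lra.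
have := one_sub_rho_le vS ncv; have := mean_shared_le_kappa v.
have := kappa_mul_le v; rewrite -/mL => kmL km rm.
have a_small := alpha_small; have a_pos := alpha_gt0.
have kp : 497/1000 <= kappa v - 1/4 by lra.
have mp : 247/1000 <= mL by lra.
nra.
Qed.

End Averaging.

End Structure.

Definition full_components (T : finType) (e : rel T) (S X Y : {set T}) :=
  [/\ forall x, x \in S -> exists2 a, a \in X & e x a,
      forall x, x \in S -> exists2 b, b \in Y & e x b,
      forall a b, a \in X -> b \in Y -> ~~ e a b,
      connected_set e X & connected_set e Y].

Lemma full_components_sym (T : finType) (e : rel T) (S X Y : {set T}) :
  symmetric e -> full_components e S X Y -> full_components e S Y X.
Proof. by move=> e_sym [fX fY aXY cX cY]; split=> // a b aY bX; rewrite e_sym aXY. Qed.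

Lemma minimal_separator_full_components (T : finType) (e : rel T) (S : {set T}) :
  symmetric e -> minimal_separator e S -> exists X Y, full_components e S X Y.
Proof.
move=> e_sym [s [t [_ [[sS tS nst] minS]]]].
have nts : ~~ connect (del_rel e S) t s by rewrite connect_del_sym.
have reconnect x : x \in S -> connect (del_rel e (S :\ x)) s t.
  move=> xS; apply/negPn/negP => nst'; apply: (minS (S :\ x)); first exact: properD1.
  by split => //; rewrite in_setD1 negb_and ?sS ?tS orbT.
exists (component e S s), (component e S t); split.
- by move=> x xS; exact: (component_full e_sym sS nst (reconnect x xS) xS).
- move=> x xS; apply: (component_full e_sym tS nts _ xS).
  by rewrite connect_del_sym //; exact: reconnect.
- by move=> a b; exact: (component_anticomplete e_sym sS tS nst).
- exact: (component_connected e_sym).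
- exact: (component_connected e_sym).
Qed.

Lemma exists_heavy_nbhd (T : finType) (e : rel T) (S X Y : {set T}) mu alpha :
  simple_graph e -> Pk_free e 7 -> full_components e S X Y -> prob_on S mu ->
  0 < alpha -> alpha <= 1/1000 -> exists v, alpha < mu_nbhd e S mu v.
Proof.
move=> [e_sym e_irr] P7_free XY [mu_ge0 mu_sum1] alpha_gt0 alpha_small.
case: (boolP [exists v, alpha < mu_nbhd e S mu v]) => [/existsP //|/existsPn light]; exfalso.
have {}light u : mu_nbhd e S mu u <= alpha by rewrite leNgt light.
have [fX fY aXY cX cY] := XY; have [_ _ aYX _ _] := full_components_sym e_sym XY.
have sX := mean_sparse_lt e_sym e_irr P7_free fX fY aXY cX cY mu_ge0 mu_sum1 light
  alpha_gt0 alpha_small.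
have sY := mean_sparse_lt e_sym e_irr P7_free fY fX aYX cY cX mu_ge0 mu_sum1 light
  alpha_gt0 alpha_small.
have [v vS] : exists2 v, v \in S &
    indic (v \in sparse e S X mu) + indic (v \in sparse e S Y mu) < 1.
  by apply: (mean_lt_exists mu_ge0); rewrite meanD mean_cst //; lra.
have rho_ge Z : v \notin sparse e S Z mu -> 1/4 <= rho e S mu Z v by rewrite inE vS leNgt.
rewrite /indic; case: ifPn => [_|/rho_ge rX]; first by case: ifP; lra.
case: ifPn => [_|/rho_ge rY]; first lra.
have := rho_mul_le e_sym e_irr P7_free aXY mu_ge0 mu_sum1 light v; nra.
Qed.

Theorem theorem3 :
  exists alpha : R, (0 < alpha)%R /\
    forall (T : finType) (e : rel T), simple_graph e -> Pk_free e 7 ->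
    forall S : {set T}, minimal_separator e S ->
    forall mu : T -> R, prob_on S mu ->
    exists v : T, (alpha <= mu_nbhd e S mu v)%R.
Proof.
exists (1/1000); split=> [|T e G P7_free S minS mu prob]; first lra.
have [X [Y XY]] := minimal_separator_full_components G.1 minS.
have [|v /ltW] := exists_heavy_nbhd G P7_free XY prob _ (lexx _); first lra.
by exists v.
Qed.
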